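(* Let $G\cong C_{n_1}\oplus\cdots\oplus C_{n_r}$ with $|G|\ge3$ and $1<n_1\mid\cdots\mid n_r$. Then \[[1,n_r-2]\cup\Big[1,-1+\sum_{i=1}^r\Big\lfloor\frac{n_i}{2}\Big\rfloor\Big]\subset\Delta(G).\]
   Context: Intervals are sets of integers: $[a,b]=\{z\in\mathbb{Z}: a\le z\le b\}$. For $A\subset\mathbb{Z}$, $\Delta(A)$ is the set of $d\in\mathbb{N}$ such that there is $l\in A$ with $A\cap[l,l+d]=\{l,l+d\}$. For a finite abelian group $G$, $\mathcal{B}(G)$ is the monoid of zero-sum sequences over $G$ (elements of the free abelian monoid on $G$ whose terms sum to $0$), its atoms are minimal zero-sum sequences, $\mathsf{L}(B)$ is the set of lengths of factorizations of $B$ into atoms, and $\Delta(G)=\bigcup_{B\in\mathcal{B}(G)}\Delta(\mathsf{L}(B))$. *)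

From HB Require Import structures.
From mathcomp Require Import all_boot all_order all_algebra all_fingroup all_solvable.
Set Implicit Arguments. Unset Strict Implicit. Unset Printing Implicit Defensive.

Local Open Scope group_scope.

Section Defs.
Variable gT : finGroupType.

(* Sequences over G (multiplicative notation; G abelian in applications),
   modelled as finite lists up to permutation (perm_eq). *)
Definition seq_over (G : {set gT}) (s : seq gT) : Prop := all (mem G) s.

Definition zero_sum (s : seq gT) : Prop := \prod_(g <- s) g = 1.

(* t divides s in the free abelian monoid: sub-multiset *)
Definition submset (t s : seq gT) : Prop :=
  forall x : gT, count_mem x t <= count_mem x s.

Definition atom (G : {set gT}) (s : seq gT) : Prop :=
  [/\ seq_over G s, s <> [::], zero_sum s &
      forall t : seq gT, t <> [::] -> submset t s -> zero_sum t -> perm_eq t s].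

Definition lengths (G : {set gT}) (B : seq gT) (k : nat) : Prop :=
  exists fs : seq (seq gT),
    [/\ size fs = k, forall a, a \in fs -> atom G a & perm_eq (flatten fs) B].

Definition delta_set (L : nat -> Prop) (d : nat) : Prop :=
  0 < d /\ exists l, [/\ L l, L (l + d) & forall m, l < m < l + d -> ~ L m].

Definition DeltaG (G : {set gT}) (d : nat) : Prop :=
  exists B : seq gT, [/\ seq_over G B, zero_sum B & delta_set (lengths G B) d].

End Defs.

From HB Require Import structures.
From mathcomp Require Import all_boot all_order all_algebra all_fingroup all_solvable.
From mathcomp Require Import zify.
Set Implicit Arguments. Unset Strict Implicit. Unset Printing Implicit Defensive.

(* Each gap [d] is realised by a zero-sum sequence [B] whose only factorization lengths are
   [2] and [K = d + 2]. The intermediate lengths are excluded because every atom [T] dividing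
   [B] either has an atomic cofactor, which forces a factorization of length [2], or has size
   [2 + k v_z(T)] for some fixed [k] and [z]; a factorization made of atoms of the second kind
   has length [(|B| - k v_z(B)) / 2 = K].
   For [d = j - 1] with [2 <= j < n = ord(g)], [B = g^n (-g)^j (jg)] factors as
   [(g^n) ((-g)^j (jg))] and as [(g^(n-j) (jg)) (g (-g))^j], with [k = n - j - 1], [z = jg].
   For [d = a_1 + ... + a_r - 1] with [2 a_i <= n_i], let [V = h e_1^(a_1) ... e_r^(a_r)]
   with [h = -(a_1 e_1 + ... + a_r e_r)]; then [B = V (-V)] factors as [V (-V)] and into the
   [|V| = d + 2] pairs [x (-x)], and [k = 0]: since the [e_i] are independent and
   [a_i <= n_i / 2], an atom dividing [B] is such a pair unless its cofactor is an atom. *)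

Section SubMultiset.
Variable T : eqType.
Implicit Types (s t u : seq T) (x : T).

(* [submset] of the definitions, over an arbitrary [eqType]. *)
Definition msub t s := forall x, count_mem x t <= count_mem x s.

Lemma perm_count_mem s t : (forall x, count_mem x s = count_mem x t) -> perm_eq s t.
Proof. by move=> eq_st; apply/allP => x _ /=; rewrite eq_st. Qed.

Lemma count_mem_perm s t x : perm_eq s t -> count_mem x s = count_mem x t.
Proof. by move/seq.permP. Qed.

Lemma mem_count_mem s x : (x \in s) = (0 < count_mem x s).
Proof. by rewrite -has_pred1 has_count. Qed.

Lemma msub_perm t s s' : perm_eq s s' -> msub t s -> msub t s'.
Proof. by move=> pss' sub_ts x; rewrite -(count_mem_perm x pss'). Qed.

Lemma msub_all (P : pred T) t s : msub t s -> all P s -> all P t.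
Proof.
move=> sub_ts /allP Ps; apply/allP => x xt; apply: Ps.
by rewrite mem_count_mem (leq_trans _ (sub_ts x)) // -mem_count_mem.
Qed.

Lemma msub_perm_cat t s : msub t s -> exists u, perm_eq s (t ++ u).
Proof.
elim: t s => [|x t IHt] s sub_ts; first by exists s.
have xs : x \in s by rewrite mem_count_mem; have := sub_ts x; rewrite /= eqxx; lia.
have prem := perm_to_rem xs.
have [u pu] : exists u, perm_eq (rem x s) (t ++ u).
  by apply: IHt => y; have := sub_ts y; rewrite (count_mem_perm y prem) /=; lia.
by exists u; apply: perm_trans prem _; rewrite /= perm_cons.
Qed.

Lemma msub_size t s : msub t s -> size t <= size s.
Proof. by case/msub_perm_cat=> u /perm_size ->; rewrite size_cat leq_addr. Qed.

Lemma msub_size_perm t s : msub t s -> size t = size s -> perm_eq t s.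
Proof.
case/msub_perm_cat=> u pu; rewrite (perm_size pu) size_cat => /eqP.
rewrite -{1}[size t]addn0 eqn_add2l eq_sym size_eq0 => /eqP u0.
by rewrite perm_sym -[t]cats0 -u0.
Qed.

Lemma msub_cat t s1 s2 : msub t (s1 ++ s2) ->
  exists t1 t2, [/\ perm_eq t (t1 ++ t2), msub t1 s1 & msub t2 s2].
Proof.
elim: t => [|x t IHt] sub_ts; first by exists [::], [::].
have [t1 [t2 [pt sub1 sub2]]] : exists t1 t2,
    [/\ perm_eq t (t1 ++ t2), msub t1 s1 & msub t2 s2].
  by apply: IHt => y; have := sub_ts y; rewrite /=; lia.
have := sub_ts x; rewrite /= eqxx count_cat (count_mem_perm x pt) count_cat => cx.
case: (ltnP (count_mem x t1) (count_mem x s1)) => lt_x1.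
- exists (x :: t1), t2; split; first by rewrite /= perm_cons.
  + by move=> y /=; have := sub1 y; case: eqP => // <-; lia.
  + exact: sub2.
- exists t1, (x :: t2); split => //.
  + by rewrite perm_sym -(cat1s x t2) perm_catCA /= perm_cons perm_sym.
  + by move=> y /=; have := sub2 y; case: eqP => // <-; lia.
Qed.

Lemma msub_nseq t n x : msub t (nseq n x) -> t = nseq (size t) x /\ size t <= n.
Proof.
move=> sub_tx; have t_x : all (pred1 x) t.
  apply/allP => y; rewrite mem_count_mem => ty; have := sub_tx y.
  by rewrite count_nseq /= eq_sym; case: eqP => //; lia.
split; first by apply/all_pred1P.
have -> : size t = count_mem x t by apply/esym/eqP; rewrite -all_count.
by have := sub_tx x; rewrite count_nseq /= eqxx mul1n.
Qed.

Lemma msub_flatten t (ss : seq (seq T)) : t \in ss -> msub t (flatten ss).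
Proof.
elim: ss => //= s ss IHss; rewrite inE => /predU1P [-> | /IHss sub_t] x.
  by rewrite count_cat leq_addr.
by rewrite count_cat (leq_trans (sub_t x)) ?leq_addl.
Qed.

Section Blocks.
Variables (I : eqType) (f : I -> T).

Definition blocks (r : seq I) (p : I -> nat) := flatten [seq nseq (p i) (f i) | i <- r].

Lemma eq_blocks r p q : p =1 q -> blocks r p = blocks r q.
Proof. by move=> eq_pq; rewrite /blocks; congr flatten; apply: eq_map => i; rewrite eq_pq. Qed.

Lemma blocks0 r : blocks r (fun=> 0) = [::].
Proof. by elim: r. Qed.

Lemma size_blocks r p : size (blocks r p) = \sum_(i <- r) p i.
Proof. by elim: r => [|i r IHr]; rewrite ?big_nil ?big_cons //= size_cat size_nseq IHr. Qed.

Lemma mem_blocks r p y : y \in blocks r p -> exists2 i, i \in r & 0 < p i /\ y = f i.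
Proof. by case/flattenP=> _ /mapP [i ri ->] /nseqP [-> p_i]; exists i. Qed.

Lemma count_mem_blocksD r p q y :
  count_mem y (blocks r (fun i => p i + q i)) =
  count_mem y (blocks r p) + count_mem y (blocks r q).
Proof.
elim: r => // i r IHr; rewrite /blocks /= !count_cat -!/(blocks _ _) IHr !count_nseq mulnDr.
lia.
Qed.

Lemma msub_blocks r c t : uniq r -> msub t (blocks r c) ->
  exists2 p, (forall i, p i <= c i) & perm_eq t (blocks r p).
Proof.
elim: r t => [|i r IHr] t.
  move=> _ /msub_size; rewrite leqn0 size_eq0 => /eqP ->.
  by exists c; rewrite ?perm_refl.
case/andP=> ri ur /msub_cat [t1 [t2 [pt sub1 sub2]]].
have [p le_px pt2] := IHr t2 ur sub2.
have [t1_i le_t1] := msub_nseq sub1.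
exists (fun k => if k == i then size t1 else p k).
  by move=> k; case: eqP => [-> //| _]; apply: le_px.
apply: perm_trans pt _; rewrite /blocks /= eqxx -t1_i perm_cat2l.
congr (perm_eq _ (flatten _)): pt2; apply/eq_in_map => k rk.
by case: eqP => // ki; rewrite -ki rk in ri.
Qed.

End Blocks.

End SubMultiset.

Lemma sum_leq_decomp (I : finType) (g : I -> nat) m : m <= \sum_i g i ->
  exists2 a : I -> nat, (forall i, a i <= g i) & \sum_i a i = m.
Proof.
elim: m => [_ | m IHm lt_m]; first by exists (fun=> 0) => //; rewrite big1.
have [a le_ag sum_a] := IHm (ltnW lt_m).
have [i lt_agi] : exists i, a i < g i.
  apply/existsP; apply: contraLR lt_m; rewrite negb_exists => /forallP ge_ag.
  by rewrite -leqNgt -sum_a; apply: leq_sum => i _; rewrite leqNgt ge_ag.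
exists (fun k => a k + (k == i)).
  by move=> k; case: eqP => [-> | _]; rewrite ?addn1 ?addn0 ?le_ag.
by rewrite big_split /= sum_a (bigD1 i) //= eqxx big1 => [|k /negPf ->]; rewrite ?addn0 ?addn1.
Qed.

Lemma modn_lt_double x n : x < 2 * n ->
  (x < n /\ x %% n = x) \/ (n <= x /\ x %% n = x - n).
Proof.
case: (ltnP x n) => lt_xn; first by left; rewrite modn_small.
by right; split => //; rewrite -{1}(subnK lt_xn) modnDr modn_small //; lia.
Qed.

Local Open Scope group_scope.

Lemma prodg_nseq (gT : finGroupType) n (x : gT) : \prod_(y <- nseq n x) y = x ^+ n.
Proof. by elim: n => [|n IHn]; rewrite ?big_nil //= big_cons IHn expgS. Qed.

Section AbelianProducts.
Variables (gT : finGroupType) (A : {group gT}).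
Hypothesis abA : abelian A.
Implicit Types (s t : seq gT) (x y : gT).

Lemma perm_prodg s t : all (mem A) s -> perm_eq s t -> \prod_(y <- s) y = \prod_(y <- t) y.
Proof.
elim: s t => [|x s IHs] t sA pst; first by move: pst; rewrite perm_sym => /perm_nilP ->.
have xt : x \in t by rewrite -(perm_mem pst) mem_head.
have tA : all (mem A) t by rewrite -(perm_all _ pst).
have prod_rem u : all (mem A) u -> x \in u ->
    \prod_(y <- u) y = x * \prod_(y <- rem x u) y.
  have xA : x \in A by case/andP: sA.
  elim: u => //= y u IHu /andP [yA uA]; rewrite inE big_cons.
  case: (eqVneq y x) => [-> //| _ /= xu].
  by rewrite big_cons IHu // !mulgA (centsP abA x xA y yA).
case/andP: sA => _ sA; rewrite (prod_rem t tA xt) big_cons (IHs (rem x t)) //.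
by rewrite -(perm_cons x); apply: perm_trans pst (perm_to_rem xt).
Qed.

Lemma prodgM I (r : seq I) (F H : I -> gT) :
  (forall i, F i \in A) -> (forall i, H i \in A) ->
  \prod_(i <- r) (F i * H i) = \prod_(i <- r) F i * \prod_(i <- r) H i.
Proof.
move=> FA HA; elim: r => [|i r IHr]; first by rewrite !big_nil mulg1.
rewrite !big_cons IHr !mulgA; congr (_ * _); rewrite -!mulgA; congr (_ * _).
by apply: (centsP abA); rewrite ?HA // group_prod.
Qed.

Lemma prodg_map_invg s : all (mem A) s ->
  \prod_(y <- map invg s) y = (\prod_(y <- s) y)^-1.
Proof.
elim: s => [|x s IHs] /=; first by rewrite !big_nil invg1.
case/andP=> xA sA; rewrite !big_cons IHs // invMg.
by apply: (centsP abA); rewrite ?groupV // big_seq group_prod // => y /(allP sA).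
Qed.

End AbelianProducts.

Lemma count_mem_map_invg (gT : finGroupType) (s : seq gT) y :
  count_mem y (map invg s) = count_mem y^-1 s.
Proof. by rewrite count_map; apply: eq_count => w /=; rewrite eqg_invLR. Qed.

Lemma msub_map_invg (gT : finGroupType) (t s : seq gT) :
  msub t (map invg s) -> exists2 t', msub t' s & t = map invg t'.
Proof.
move=> sub_ts; exists (map invg t); last by rewrite (mapK invgK).
by move=> w; rewrite count_mem_map_invg; have := sub_ts w^-1; rewrite count_mem_map_invg invgK.
Qed.

Lemma perm_flatten_pairs (gT : finGroupType) (s : seq gT) :
  perm_eq (flatten [seq [:: x; x^-1] | x <- s]) (s ++ map invg s).
Proof.
elim: s => //= x s IHs; rewrite perm_cons -(cat1s x^-1 (map invg s)) perm_sym.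
by rewrite perm_catCA /= perm_cons perm_sym.
Qed.

Section Atoms.
Variables (gT : finGroupType) (A : {group gT}).
Implicit Types (s t B C : seq gT) (x : gT).

Lemma atom_pair x : x \in A -> x != 1 -> atom A [:: x; x^-1].
Proof.
move=> xA x_neq1; split.
- by rewrite /seq_over /= xA groupV xA.
- by [].
- by rewrite /zero_sum !big_cons big_nil mulg1 mulgV.
move=> t t_neq0 sub_t zs_t; apply: (msub_size_perm sub_t).
have := msub_size sub_t; case: t t_neq0 sub_t zs_t => [//|y [|y' [|//]]] _ sub_t //.
rewrite /zero_sum big_seq1 => y1 _; have := sub_t 1.
by rewrite y1 /= eqxx invg_eq1 (negbTE x_neq1).
Qed.

Lemma atom_perm s s' : abelian A -> perm_eq s s' -> atom A s -> atom A s'.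
Proof.
move=> abA pss' [sA s_neq0 zs_s min_s]; split.
- by rewrite /seq_over -(perm_all _ pss').
- by move=> s'0; move: pss'; rewrite s'0 => /perm_nilP.
- by rewrite /zero_sum -(perm_prodg abA sA pss').
move=> t t_neq0 sub_t zs_t; apply: (perm_trans (min_s t t_neq0 _ zs_t) pss').
by move=> w; rewrite (count_mem_perm w pss').
Qed.

Lemma atom_map_invg s : abelian A -> atom A s -> atom A (map invg s).
Proof.
move=> abA [sA s_neq0 zs_s min_s]; split.
- by rewrite /seq_over all_map; apply/allP => x /(allP sA) /=; rewrite groupV.
- by case: s s_neq0 {sA zs_s min_s}.
- by rewrite /zero_sum (prodg_map_invg abA sA) zs_s invg1.
move=> t t_neq0 /msub_map_invg [t' sub_t' def_t] zs_t.
rewrite {}def_t in t_neq0 zs_t *; apply: perm_map.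
have t'A := msub_all sub_t' sA.
apply: min_s => //; first by move=> t'0; apply: t_neq0; rewrite t'0.
by apply/eqP; rewrite -invg_eq1 -(prodg_map_invg abA t'A); apply/eqP.
Qed.

Lemma atom_size_symmetric C V : atom A C -> perm_eq C (V ++ map invg V) -> V != [::] ->
  size C = 2%N.
Proof.
case: V => [//|x V] [_ _ _ min_C] pCV _.
have : perm_eq [:: x; x^-1] C.
  apply: min_C => //; last by rewrite /zero_sum !big_cons big_nil mulg1 mulgV.
  by move=> w; rewrite (count_mem_perm w pCV) /= count_cat /=; lia.
by move/perm_size <-.
Qed.

Lemma lengths_atom C K : atom A C -> lengths A C K -> K = 1%N.
Proof.
move=> [_ C_neq0 _ min_C] [fs [<- fsA pfs]].
case: fs fsA pfs => [_ | a rest fsA pfs]; first by rewrite perm_sym => /perm_nilP.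
have [_ a_neq0 zs_a _] := fsA a (mem_head _ _).
have pa := min_C a a_neq0 (msub_perm pfs (msub_flatten (mem_head a rest))) zs_a.
have := perm_size pfs; rewrite /= size_cat (perm_size pa).
case: rest fsA {pfs} => // a' rest fsA /=; rewrite size_cat.
have [_ a'_neq0 _ _] : atom A a' by apply: fsA; rewrite !inE eqxx orbT.
by case: a' a'_neq0 {fsA} => //= y a' _; lia.
Qed.

Definition split_or_affine B k z := forall T, atom A T -> msub T B ->
  size T = (2 + k * count_mem z T)%N \/ exists2 C, atom A C & perm_eq B (T ++ C).

Lemma size_flatten_affine k z (fs : seq (seq gT)) :
  (forall a, a \in fs -> size a = (2 + k * count_mem z a)%N) ->
  size (flatten fs) = (2 * size fs + k * count_mem z (flatten fs))%N.
Proof.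
elim: fs => [_ | a fs IHfs fsE] /=; first by rewrite !muln0.
rewrite size_cat count_cat IHfs => [|b bfs]; last by apply: fsE; rewrite inE bfs orbT.
by rewrite fsE ?mem_head // mulnDr mulnS addnACA.
Qed.

Lemma lengths_split_or_affine B k z K : split_or_affine B k z -> lengths A B K ->
  K = 2%N \/ (2 * K + k * count_mem z B)%N = size B.
Proof.
move=> Bsplit [fs [<- fsA pfs]].
have [/allP fs_affine | /allPn [T Tfs T_not_affine]] :=
  boolP (all (fun T => size T == 2 + k * count_mem z T)%N fs).
  right; rewrite -(perm_size pfs) -(count_mem_perm z pfs).
  by rewrite (size_flatten_affine (k := k) (z := z)) // => a /fs_affine /eqP.
left; have [E | [C CA pBC]] := Bsplit T (fsA T Tfs) (msub_perm pfs (msub_flatten Tfs)).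
  by rewrite E eqxx in T_not_affine.
have pfs' := perm_to_rem Tfs.
have : lengths A C (size fs).-1.
  exists (rem T fs); split; [by rewrite size_rem | by move=> a /mem_rem /fsA |].
  rewrite -(perm_cat2l T); apply: perm_trans pBC; apply: perm_trans pfs.
  by rewrite perm_sym; apply: (perm_flatten pfs').
move/(lengths_atom CA); rewrite (perm_size pfs') /=; lia.
Qed.

Lemma delta_set_lengths B k z K : split_or_affine B k z ->
  lengths A B 2 -> lengths A B K -> (2 * K + k * count_mem z B)%N = size B -> (2 < K)%N ->
  delta_set (lengths A B) (K - 2).
Proof.
move=> Bsplit L2 LK sizeB K_gt2; split; first by rewrite subn_gt0.
exists 2%N; split => //; first by rewrite subnKC // ltnW.
move=> m /andP [m_gt2 m_lt] /(lengths_split_or_affine Bsplit) [m2 | size_m]; lia.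
Qed.

End Atoms.

Section CyclicDelta.
Variables (gT : finGroupType) (G : {group gT}) (g : gT) (j : nat).
Hypotheses (gG : g \in G) (j_ge2 : (2 <= j)%N) (j_lt_n : (j < #[g])%N).

Local Notation n := #[g].
Local Notation z := (g ^+ j).
Local Notation k := (#[g] - j - 1)%N.

Definition cycseq p q c := nseq p g ++ nseq q g^-1 ++ nseq c z.

Lemma cycseq_in_cycle p q c : all (mem <[g]>) (cycseq p q c).
Proof. by rewrite !all_cat !all_nseq /= groupV mem_cycle cycle_id !orbT. Qed.

Lemma seq_over_cycseq p q c : seq_over G (cycseq p q c).
Proof.
apply: sub_all (cycseq_in_cycle p q c) => x; apply: (subsetP _ x).
by rewrite cycle_subG.
Qed.

Lemma size_cycseq p q c : size (cycseq p q c) = (p + q + c)%N.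
Proof. by rewrite !size_cat !size_nseq addnA. Qed.

Lemma zero_sum_cycseq p q c : zero_sum (cycseq p q c) <-> (p + j * c = q %[mod n])%N.
Proof.
rewrite /zero_sum !big_cat !prodg_nseq /= expVgn -expgM.
have -> : (g ^+ q)^-1 * g ^+ (j * c) = g ^+ (j * c) * (g ^+ q)^-1.
  by apply: (centsP (cycle_abelian g)); rewrite ?groupV mem_cycle.
rewrite mulgA -expgD; split => [/eqP | /eqP].
  by rewrite -eq_mulgV1 eq_expg_mod_order => /eqP.
by rewrite -eq_expg_mod_order eq_mulgV1 => /eqP.
Qed.

Lemma msub_cycseq t p0 q0 c0 : msub t (cycseq p0 q0 c0) ->
  exists p q c, [/\ (p <= p0)%N, (q <= q0)%N, (c <= c0)%N & perm_eq t (cycseq p q c)].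
Proof.
case/msub_cat => t1 [t2 [pt sub1 /msub_cat [t3 [t4 [pt2 sub3 sub4]]]]].
have [t1E le1] := msub_nseq sub1; have [t3E le3] := msub_nseq sub3.
have [t4E le4] := msub_nseq sub4.
exists (size t1), (size t3), (size t4); split => //.
apply: perm_trans pt _; rewrite /cycseq {1}t1E perm_cat2l.
by apply: perm_trans pt2 _; rewrite {1}t3E {1}t4E.
Qed.

Lemma zero_sum_msub_cycseq t p q c p0 q0 c0 : msub t (cycseq p0 q0 c0) ->
  perm_eq t (cycseq p q c) -> zero_sum t -> (p + j * c = q %[mod n])%N.
Proof.
move=> sub_t pt zs_t; apply/zero_sum_cycseq.
rewrite /zero_sum -(perm_prodg (cycle_abelian g) _ pt) //.
exact: msub_all sub_t (cycseq_in_cycle _ _ _).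
Qed.

Lemma atom_cycseq p0 q0 c0 : (0 < p0 + q0 + c0)%N -> (p0 + j * c0 = q0 %[mod n])%N ->
  (forall p q c, (p <= p0)%N -> (q <= q0)%N -> (c <= c0)%N -> (0 < p + q + c)%N ->
     (p + j * c = q %[mod n])%N -> [/\ p = p0, q = q0 & c = c0]) ->
  atom G (cycseq p0 q0 c0).
Proof.
move=> size_gt0 zs0 min0; split.
- exact: seq_over_cycseq.
- by move/(congr1 size); rewrite size_cycseq /=; lia.
- exact/zero_sum_cycseq.
move=> t t_neq0 sub_t zs_t.
have [p [q [c [le_p le_q le_c pt]]]] := msub_cycseq sub_t.
have : (0 < p + q + c)%N.
  by rewrite -size_cycseq -(perm_size pt) lt0n size_eq0; apply/eqP.
move/min0 => /(_ le_p le_q le_c (zero_sum_msub_cycseq sub_t pt zs_t)) [Ep Eq Ec].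
by rewrite -Ep -Eq -Ec.
Qed.

Lemma order_gt2 : (2 < n)%N.
Proof. exact: leq_ltn_trans j_ge2 j_lt_n. Qed.

Lemma g_neq1 : g != 1.
Proof. by apply: contraTneq order_gt2 => ->; rewrite order1. Qed.

Lemma g_neq_z : (g == z) = false.
Proof.
by rewrite -{1}(expg1 g) eq_expg_mod_order !modn_small ?order_gt2; try lia.
Qed.

Lemma inv_eq_z : (g^-1 == z) -> j = n.-1.
Proof.
have inv_g : g^-1 = g ^+ n.-1.
  by apply/eqP; rewrite eq_invg_mul -expgS prednK ?order_gt0 ?expg_order.
by rewrite inv_g eq_expg_mod_order !modn_small //; [move/eqP | lia].
Qed.

Lemma atom_gn : atom G (cycseq n 0 0).
Proof.
apply: atom_cycseq; rewrite ?order_gt0 ?muln0 ?addn0 ?modnn ?mod0n //.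
move=> p q c le_p le_q le_c pos; have [-> ->] : q = 0%N /\ c = 0%N by lia.
rewrite muln0 addn0 mod0n => mod_p.
by have [[? ?]|[? ?]] := @modn_lt_double p n ltac:(lia); split; lia.
Qed.

Lemma atom_ginv_z : atom G (cycseq 0 j 1).
Proof.
apply: atom_cycseq; rewrite ?muln1 //; try lia.
move=> p q c le_p le_q le_c pos; have -> : p = 0%N by lia.
have [[? ?]|[? ?]] := @modn_lt_double q n ltac:(lia);
have := modn_small j_lt_n; case: c le_c pos => [|[|//]] _ pos j_mod;
  rewrite ?muln0 ?muln1 add0n ?mod0n => mod_q; split; lia.
Qed.

Lemma atom_gnj_z : atom G (cycseq (n - j) 0 1).
Proof.
apply: atom_cycseq; rewrite ?muln1 ?subnK ?modnn ?mod0n //; try lia.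
move=> p q c le_p le_q le_c pos; have -> : q = 0%N by lia.
rewrite mod0n; case: c le_c pos => [|[|//]] _ pos; rewrite ?muln0 ?addn0 ?muln1 => mod_p.
  by have [[? ?]|[? ?]] := @modn_lt_double p n ltac:(lia); split; lia.
by have [[? ?]|[? ?]] := @modn_lt_double (p + j) n ltac:(lia); split; lia.
Qed.

Lemma zero_sum_cycseq_cases p q c : (p <= n)%N -> (q <= j)%N -> (c <= 1)%N ->
  p = 0%N \/ q = 0%N -> (0 < p + q + c)%N -> (p + j * c = q %[mod n])%N ->
  [\/ [/\ p = n, q = 0 & c = 0], [/\ p = 0, q = j & c = 1] | [/\ p = n - j, q = 0 & c = 1]]%N.
Proof.
move=> le_p le_q le_c p0_or_q0 pos.
rewrite (@modn_small q) ?(leq_ltn_trans le_q j_lt_n) //.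
case: c le_c pos => [|[|//]] _ pos.
  rewrite muln0 addn0; have [p_lt_n | p_eq_n] := ltnP p n.
    by rewrite modn_small // => pq; exfalso; lia.
  by move=> _; apply: Or31; split; lia.
rewrite muln1; case: p0_or_q0 => [p0 | q0]; subst.
  by rewrite add0n modn_small // => jq; apply: Or32.
have [[? ->] | [? ->]] := @modn_lt_double (p + j) n ltac:(lia) => pj.
  by exfalso; lia.
by apply: Or33; split; lia.
Qed.

Lemma cycseq_split_or_affine : split_or_affine G (cycseq n j 1) k z.
Proof.
move=> T [_ T_neq0 zs_T min_T] sub_T.
have [p [q [c [le_p le_q le_c pT]]]] := msub_cycseq sub_T.
have pos : (0 < p + q + c)%N.
  by rewrite -size_cycseq -(perm_size pT) lt0n size_eq0; apply/eqP.
have [/andP [p_gt0 q_gt0] | p0_or_q0] := boolP ((0 < p) && (0 < q))%N.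
  left; have pair_T : perm_eq [:: g; g^-1] T.
    apply: min_T => //; last by rewrite /zero_sum !big_cons big_nil mulg1 mulgV.
    move=> w; rewrite (count_mem_perm w pT) /cycseq !count_cat !count_nseq /=.
    by case: (g == w); case: (g^-1 == w); rewrite /=; lia.
  rewrite -(perm_size pair_T) -(count_mem_perm z pair_T) /= g_neq_z.
  by case: eqP => [/eqP/inv_eq_z | _]; rewrite /=; lia.
have {}p0_or_q0 : p = 0%N \/ q = 0%N.
  by move: p0_or_q0; rewrite negb_and -!eqn0Ngt => /orP [] /eqP; auto.
move: (zero_sum_msub_cycseq sub_T pT zs_T).
move/(zero_sum_cycseq_cases le_p le_q le_c p0_or_q0 pos).
case=> [[Ep Eq Ec] | [Ep Eq Ec] | [Ep Eq Ec]]; subst p q c.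
- right; exists (cycseq 0 j 1); first exact: atom_ginv_z.
  by rewrite perm_sym (perm_catr _ pT) /cycseq /= cats0.
- right; exists (cycseq n 0 0); first exact: atom_gn.
  by rewrite perm_sym perm_catC (perm_catl _ pT) /cycseq /= cats0.
- left; rewrite (perm_size pT) (count_mem_perm z pT) size_cycseq.
  by rewrite /cycseq !count_cat !count_nseq /= g_neq_z eqxx; lia.
Qed.

Lemma DeltaG_cycle : DeltaG G j.-1.
Proof.
exists (cycseq n j 1); split; first exact: seq_over_cycseq.
  by apply/zero_sum_cycseq; rewrite muln1 modnDl.
have -> : j.-1 = (j.+1 - 2)%N by lia.
apply: (delta_set_lengths cycseq_split_or_affine).
- exists [:: cycseq n 0 0; cycseq 0 j 1]; split => //; last by rewrite /cycseq /= !cats0.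
  by move=> a; rewrite !inE => /orP [] /eqP ->; [exact: atom_gn | exact: atom_ginv_z].
- exists (cycseq (n - j) 0 1 :: nseq j [:: g; g^-1]); split; first by rewrite /= size_nseq.
    move=> a; rewrite inE => /predU1P [-> | /nseqP [-> _]]; first exact: atom_gnj_z.
    exact: atom_pair gG g_neq1.
  apply: perm_count_mem => w; rewrite /= count_cat count_flatten map_nseq sumn_nseq.
  rewrite /cycseq !count_cat !count_nseq /=.
  by case: (g == w); case: (g^-1 == w); rewrite /=; lia.
- rewrite size_cycseq /cycseq !count_cat !count_nseq /= g_neq_z eqxx.
  by case: eqP => [/eqP/inv_eq_z | _] /=; lia.
- by [].
Qed.

End CyclicDelta.

Section BigdprodCycles.
Variables (gT : finGroupType) (I : finType) (e : I -> gT) (G : {group gT}).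
Hypothesis defG : \big[dprod/1]_i <[e i]> = G.

Lemma abelian_bigdprod_cycles : abelian G.
Proof.
elim/big_rec: _ G defG => [G0 <- | i B _ IH G0 /dprodP [[K H defK defH] <- cKH _]].
  exact: abelian1.
by rewrite defK defH abelianM -defK cycle_abelian (IH H defH) -defH cKH.
Qed.

Lemma mem_bigdprod_cycles i : e i \in G.
Proof. by rewrite -(bigdprodWY defG) mem_gen //; apply/bigcupP; exists i; rewrite ?cycle_id. Qed.

Lemma bigdprod_cycles_expg_inj (p q : I -> nat) :
  \prod_i e i ^+ p i = \prod_i e i ^+ q i -> forall i, e i ^+ p i = e i ^+ q i.
Proof.
move=> eq_pq i.
have xG : \prod_i e i ^+ p i \in G by apply: group_prod => k _; rewrite groupX ?mem_bigdprod_cycles.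
have [c [_ _ uniq_c]] := mem_bigdprod defG xG.
rewrite (uniq_c (fun k => e k ^+ p k)) ?(uniq_c (fun k => e k ^+ q k)) // => k _;
  exact: mem_cycle.
Qed.

End BigdprodCycles.

Lemma bigdprod_cycles_nth (gT : finGroupType) (G : {group gT}) (b : seq gT) :
  \big[dprod/1]_(x <- b) <[x]> = G -> \big[dprod/1]_(i < size b) <[nth 1 b i]> = G.
Proof. by rewrite (big_nth 1) big_mkord. Qed.

Lemma mem_bigdprod_seq_cycles (gT : finGroupType) (G : {group gT}) (b : seq gT) y :
  \big[dprod/1]_(x <- b) <[x]> = G -> y \in b -> y \in G.
Proof.
move=> /bigdprod_cycles_nth defG yb; rewrite -(nth_index 1 yb).
have ib : index y b < size b by rewrite index_mem.
exact: (mem_bigdprod_cycles defG (Ordinal ib)).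
Qed.

Section DprodDelta.
Variables (gT : finGroupType) (I : finType) (e : I -> gT) (G : {group gT}).
Hypothesis defG : \big[dprod/1]_i <[e i]> = G.
Variable a : I -> nat.
Hypothesis a_half : forall i, (2 * a i <= #[e i])%N.

Let abG := abelian_bigdprod_cycles defG.

Definition expprod (p : I -> nat) := \prod_i e i ^+ p i.

Local Notation h := (expprod a)^-1.

(* The sequence [B = V (-V)] is [wseq 1 a 1 a], with [V = vseq 1 a]. *)
Definition vseq s p := nseq s h ++ blocks e (index_enum I) p.
Definition wseq s1 p s2 q := vseq s1 p ++ map invg (vseq s2 q).

Definition compl_exps (p q : I -> nat) := forall i,
  (p i = a i /\ q i = 0%N) \/ [/\ p i = 0%N, q i = a i & (2 * a i)%N = #[e i]].

Lemma expprod_in p : expprod p \in G.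
Proof. by apply: group_prod => i _; rewrite groupX ?(mem_bigdprod_cycles defG). Qed.

Lemma vseq_in s p : all (mem G) (vseq s p).
Proof.
rewrite all_cat all_nseq /= groupV expprod_in orbT /=.
by apply/allP => w /mem_blocks [i _ [_ ->]]; apply: (mem_bigdprod_cycles defG).
Qed.

Lemma wseq_in s1 p s2 q : all (mem G) (wseq s1 p s2 q).
Proof.
rewrite all_cat vseq_in all_map; apply/allP => w /(allP (vseq_in s2 q)) /=.
by rewrite groupV.
Qed.

Lemma prod_vseq s p : \prod_(w <- vseq s p) w = h ^+ s * expprod p.
Proof.
rewrite big_cat prodg_nseq big_flatten big_map; congr (_ * _).
by apply: eq_bigr => i _; rewrite prodg_nseq.
Qed.

Lemma zero_sum_wseq s1 p s2 q :
  zero_sum (wseq s1 p s2 q) <-> h ^+ s1 * expprod p = h ^+ s2 * expprod q.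
Proof.
rewrite /zero_sum big_cat /= (prodg_map_invg abG (vseq_in s2 q)) !prod_vseq.
by split=> [prod1 | ->]; [apply/eqP; rewrite eq_mulgV1 prod1 | rewrite mulgV].
Qed.

Lemma expprodD p q : expprod (fun i => p i + q i)%N = expprod p * expprod q.
Proof.
rewrite /expprod -(prodgM abG) => [|i|i]; rewrite ?groupX ?(mem_bigdprod_cycles defG) //.
by apply: eq_bigr => i _; rewrite expgD.
Qed.

Lemma expprod_inj p q : (forall i, p i <= a i)%N -> (forall i, q i <= a i)%N ->
  expprod p = expprod q -> p =1 q.
Proof.
move=> le_pa le_qa /(bigdprod_cycles_expg_inj defG) eq_pq i.
have a_lt : (a i < #[e i])%N by have := a_half i; have := order_gt0 (e i); lia.
move/eqP: (eq_pq i); rewrite eq_expg_mod_order !modn_small => [/eqP //||];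
  exact: leq_ltn_trans a_lt.
Qed.

Lemma h_expprod_compl p q : (forall i, p i <= a i)%N -> (forall i, q i <= a i)%N ->
  h * expprod p = expprod q <-> compl_exps p q.
Proof.
move=> le_pa le_qa; split => [hpq i | compl_pq].
  have : expprod p = expprod (fun i => a i + q i)%N by rewrite expprodD -hpq mulgA mulgV mul1g.
  move/(bigdprod_cycles_expg_inj defG)/(_ i)/eqP; rewrite eq_expg_mod_order => /eqP.
  have := le_pa i; have := le_qa i; have := a_half i; have := order_gt0 (e i).
  move=> n_gt0 a_le le_q le_p; rewrite modn_small; last by lia.
  have [[? ->]|[? ->]] := @modn_lt_double (a i + q i) #[e i] ltac:(lia) => pE.
    by left; lia.
  by right; split; lia.
suff -> : expprod p = expprod (fun i => a i + q i)%N by rewrite expprodD mulgA mulVg mul1g.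
apply: eq_bigr => i _; have [[-> ->] | [-> -> n_eq]] := compl_pq i.
  by rewrite addn0.
by rewrite addnn -mul2n n_eq expg_order expg0.
Qed.

Lemma msub_vseq t s0 p0 : msub t (vseq s0 p0) ->
  exists s p, [/\ (s <= s0)%N, (forall i, p i <= p0 i)%N & perm_eq t (vseq s p)].
Proof.
case/msub_cat => t1 [t2 [pt sub1 sub2]].
have [t1E le1] := msub_nseq sub1.
have [p le_p pt2] := msub_blocks (index_enum_uniq I) sub2.
exists (size t1), p; split => //.
by apply: perm_trans pt _; rewrite /vseq {1}t1E perm_cat2l.
Qed.

Lemma msub_wseq t s01 p0 s02 q0 : msub t (wseq s01 p0 s02 q0) ->
  exists s1 p s2 q, [/\ (s1 <= s01)%N, (forall i, p i <= p0 i)%N, (s2 <= s02)%N,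
     (forall i, q i <= q0 i)%N & perm_eq t (wseq s1 p s2 q)].
Proof.
case/msub_cat => t1 [t2 [pt sub1 /msub_map_invg [t2' sub2 t2E]]].
have [s1 [p [le_s1 le_p pt1]]] := msub_vseq sub1.
have [s2 [q [le_s2 le_q pt2]]] := msub_vseq sub2.
exists s1, p, s2, q; split => //.
by apply: perm_trans pt _; rewrite t2E; apply: perm_cat => //; apply: perm_map.
Qed.

Lemma zero_sum_msub_wseq t s1 p s2 q s01 p0 s02 q0 : msub t (wseq s01 p0 s02 q0) ->
  perm_eq t (wseq s1 p s2 q) -> zero_sum t -> h ^+ s1 * expprod p = h ^+ s2 * expprod q.
Proof.
move=> sub_t pt zs_t; apply/zero_sum_wseq.
by rewrite /zero_sum -(perm_prodg abG _ pt) // (msub_all sub_t (wseq_in _ _ _ _)).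
Qed.

Lemma compl_exps_le p q : compl_exps p q -> (forall i, p i <= a i)%N /\ (forall i, q i <= a i)%N.
Proof. by move=> cpq; split=> i; case: (cpq i) => [[? ?] | [? ? ?]]; lia. Qed.

Lemma perm_wseq_compl p q : compl_exps p q ->
  perm_eq (wseq 1 p 0 q ++ wseq 0 q 1 p) (wseq 1 a 1 a).
Proof.
move=> cpq; have a_pq : a =1 (fun i => p i + q i)%N.
  by move=> i; case: (cpq i) => [[-> ->] | [-> -> _]]; rewrite ?addn0.
apply: perm_count_mem => w; rewrite /wseq /vseq (eq_blocks _ _ a_pq) !count_cat.
rewrite !count_mem_map_invg !count_cat /= !count_mem_blocksD.
move: (h == w) (h == w^-1) (count_mem w _) (count_mem w _) (count_mem w^-1 _) (count_mem w^-1 _).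
move=> [] [] *; lia.
Qed.

Lemma atom_wseq x y : compl_exps x y -> atom G (wseq 1 x 0 y).
Proof.
move=> cxy; have [le_xa le_ya] := compl_exps_le cxy.
split; [exact: wseq_in | by [] | |].
  by apply/zero_sum_wseq; rewrite expg1 expg0 mul1g; apply/h_expprod_compl.
move=> t t_neq0 sub_t zs_t.
have [s1 [p [s2 [q [le_s1 le_p le_s2 le_q pt]]]]] := msub_wseq sub_t.
have le_pa i : (p i <= a i)%N := leq_trans (le_p i) (le_xa i).
have le_qa i : (q i <= a i)%N := leq_trans (le_q i) (le_ya i).
move: (zero_sum_msub_wseq sub_t pt zs_t); move: le_s2 pt; rewrite leqn0 => /eqP -> pt.
rewrite expg0 mul1g; case: s1 le_s1 pt => [|[|//]] _ pt.
  rewrite expg0 mul1g => /(expprod_inj le_pa le_qa) eq_pq.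
  have p0 i : p i = 0%N.
    by have := eq_pq i; have := le_p i; have := le_q i; case: (cxy i) => [[? ?]|[? ? ?]]; lia.
  have q0 i : q i = 0%N by rewrite -eq_pq p0.
  by move: pt; rewrite /wseq /vseq (eq_blocks _ _ p0) (eq_blocks _ _ q0) blocks0 => /perm_nilP.
rewrite expg1 => /(h_expprod_compl le_pa le_qa) cpq.
have [eq_px eq_qy] : p =1 x /\ q =1 y.
  by split=> i; have := le_p i; have := le_q i;
    case: (cxy i) => [[? ?]|[? ? ?]]; case: (cpq i) => [[? ?]|[? ? ?]]; lia.
by rewrite /wseq /vseq -(eq_blocks _ _ eq_px) -(eq_blocks _ _ eq_qy).
Qed.

Lemma atom_wseq_inv x y : compl_exps x y -> atom G (wseq 0 y 1 x).
Proof.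
move=> cxy; apply: (atom_perm abG _ (atom_map_invg abG (atom_wseq cxy))).
by rewrite /wseq map_cat (mapK invgK) perm_catC.
Qed.

Lemma wseq_split_or_affine : split_or_affine G (wseq 1 a 1 a) 0 1.
Proof.
move=> T T_atom sub_T; have [_ T_neq0 zs_T _] := T_atom.
have [s1 [p [s2 [q [le_s1 le_p le_s2 le_q pT]]]]] := msub_wseq sub_T.
have size_sym s : perm_eq T (wseq s p s q) -> expprod p = expprod q ->
    size T = (2 + 0 * count_mem (1%g : gT) T)%N.
  move=> pTs /(expprod_inj le_p le_q) eq_pq; rewrite mul0n addn0.
  rewrite /wseq {2}/vseq -(eq_blocks _ _ eq_pq) -/(vseq s p) in pTs.
  apply: (atom_size_symmetric T_atom pTs); apply/eqP => vs0; apply: T_neq0.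
  by apply/perm_nilP; rewrite vs0 in pTs.
move: (zero_sum_msub_wseq sub_T pT zs_T).
case: s1 s2 le_s1 le_s2 pT => [|[|//]] [|[|//]] _ _ pT; rewrite ?expg0 ?expg1 ?mul1g.
- by move/(size_sym 0%N pT); left.
- move/esym/(h_expprod_compl le_q le_p) => cqp; right.
  exists (wseq 1 q 0 p); first exact: atom_wseq.
  by rewrite perm_sym perm_catC (perm_catl _ pT) perm_wseq_compl.
- move/(h_expprod_compl le_p le_q) => cpq; right.
  exists (wseq 0 q 1 p); first exact: atom_wseq_inv.
  by rewrite perm_sym (perm_catr _ pT) perm_wseq_compl.
- by move/mulgI/(size_sym 1%N pT); left.
Qed.

Hypothesis sum_a_ge2 : (2 <= \sum_i a i)%N.

Lemma h_neq1 : h != 1.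
Proof.
rewrite invg_eq1; apply/eqP => /esym.
have -> : 1 = expprod (fun=> 0%N) by rewrite /expprod big1 // => i _; rewrite expg0.
move/(expprod_inj (fun=> leq0n _) (fun=> leqnn _)) => a0.
have : (\sum_i a i = 0)%N by rewrite big1 // => i _; rewrite -a0.
lia.
Qed.

Lemma DeltaG_bigdprod : DeltaG G (\sum_i a i).-1.
Proof.
exists (wseq 1 a 1 a); split; [exact: wseq_in | exact/zero_sum_wseq |].
have -> : (\sum_i a i).-1 = ((\sum_i a i).+1 - 2)%N by lia.
have ca0 : compl_exps a (fun=> 0%N) by move=> i; left.
apply: (delta_set_lengths wseq_split_or_affine).
- exists [:: wseq 1 a 0 (fun=> 0%N); wseq 0 (fun=> 0%N) 1 a]; split => //.
    by move=> x; rewrite !inE => /orP [] /eqP ->; [exact: atom_wseq | exact: atom_wseq_inv].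
  by rewrite /= cats0 perm_wseq_compl.
- exists [seq [:: w; w^-1] | w <- vseq 1 a]; split.
  + by rewrite size_map /vseq size_cat size_blocks.
  + move=> x /mapP [w wV ->]; apply: atom_pair; first exact: (allP (vseq_in 1 a)).
    move: wV; rewrite mem_cat => /orP [/nseqP [-> _] | /mem_blocks [i _ [a_gt0 ->]]].
      exact: h_neq1.
    by apply: contraTneq (a_half i) => ->; rewrite order1 -ltnNge; lia.
  + exact: perm_flatten_pairs.
- by rewrite size_cat size_map /vseq size_cat size_blocks /=; lia.
- by [].
Qed.

End DprodDelta.

Unset Implicit Arguments. Set Strict Implicit. Set Printing Implicit Defensive.

Theorem lemma5p4 (gT : finGroupType) (G : {group gT}) (ns : seq nat) (b : seq gT) :
  \big[dprod/1]_(x <- b) <[x]> = G ->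
  map order b = ns ->
  (2 < #|G|)%N ->
  (1 < head 0 ns)%N ->
  sorted dvdn ns ->
  forall d : nat,
    ((1 <= d <= last 0 ns - 2)%N \/
     (1 <= d <= (\sum_(n <- ns) n./2) - 1)%N) ->
    DeltaG G d.
Proof.
move=> defG <- _ _ _ d [/andP [d_gt0 d_le] | /andP [d_gt0 d_le]].
  case: b defG d_le => [|x b] defG /=; first lia.
  rewrite last_map; set g := last x b => d_le.
  have gG : g \in G := mem_bigdprod_seq_cycles defG (mem_last x b).
  by apply: (DeltaG_cycle gG (j := d.+1)); lia.
have sum_ns : \sum_(n <- map order b) n./2 = \sum_(i < size b) #[nth 1%g b i]./2.
  by rewrite big_map (big_nth 1) big_mkord.
rewrite sum_ns in d_le.
have [a le_a sum_a] : exists2 a : 'I_(size b) -> nat,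
    forall i, a i <= #[nth 1 b i]./2 & \sum_i a i = d.+1.
  by apply: sum_leq_decomp; move: d_le; set S := \sum_(i < _) _; lia.
rewrite -[d]/(d.+1.-1) -sum_a; apply: (DeltaG_bigdprod (bigdprod_cycles_nth defG)).
  by move=> i; have := le_a i; have := odd_double_half #[nth 1 b i]; lia.
by rewrite sum_a.
Qed.
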